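(* Let $\mathcal H_A,\mathcal H_B$ be finite-dimensional Hilbert spaces, $|0_A\rangle\in\mathcal H_A$, $|0_B\rangle\in\mathcal H_B$ unit vectors, $|0\rangle=|0_A\rangle\otimes|0_B\rangle$, and let $|\phi\rangle\in\mathcal H_A\otimes\mathcal H_B$ be a unit vector. Decompose $|\phi\rangle=|x\rangle\otimes|0_B\rangle+|y\rangle$ with $|x\rangle=(\mathbb 1_A\otimes\langle 0_B|)|\phi\rangle$ and $(\mathbb 1_A\otimes\langle 0_B|)|y\rangle=0$, and assume $|y\rangle\neq0$. Fix $0<\epsilon<1$, let $|\psi\rangle=(|0\rangle+\epsilon|\phi\rangle)/\sqrt{\mathcal N}$ with $\mathcal N=1+\epsilon^2+2\epsilon\,\mathrm{Re}\langle0|\phi\rangle$, $\rho_A=\operatorname{tr}_B|\psi\rangle\langle\psi|$, $\mu=\epsilon^2\langle y|y\rangle/\mathcal N$ and $\omega=\operatorname{tr}_B|y\rangle\langle y|/\langle y|y\rangle$. Then $$\mu\,S_1(\omega)\le S_1(\rho_A)\le h_2(\mu)+\mu\,S_1(\omega),$$ where $h_2(x)=-x\log x-(1-x)\log(1-x)$.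
   Context: $S_1(\rho)=-\operatorname{tr}\rho\log\rho$ is the von Neumann entropy. One has $\rho_A=(1-\mu)|v\rangle\langle v|+\mu\,\omega$ with $|v\rangle=(|0_A\rangle+\epsilon|x\rangle)/\sqrt{\mathcal N(1-\mu)}$ a unit vector. *)

From HB Require Import structures.
From mathcomp Require Import all_boot all_order all_algebra.
From mathcomp Require Import reals exp.
From mathcomp.real_closed Require Import complex.
Set Implicit Arguments. Unset Strict Implicit. Unset Printing Implicit Defensive.
Import Order.TTheory GRing.Theory Num.Theory.
Local Open Scope ring_scope.
Local Open Scope complex_scope.

Definition adjmx (R : rcfType) m n (M : 'M[R[i]]_(m, n)) : 'M[R[i]]_(n, m) :=
  (map_mx (fun z => z^*) M)^T.

(* A vector of
   H_A (x) H_B = C^m (x) C^n is represented by its coefficient matrix in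
   'M_(m, n) (coefficient of e_i (x) f_j at entry (i, j)); column vectors
   'cV_m are vectors of C^m. *)
Definition inner (R : rcfType) m n (u v : 'M[R[i]]_(m, n)) : R[i] :=
  \sum_(i < m) \sum_(j < n) (u i j)^* * v i j.

Definition tens (R : rcfType) m n (a : 'cV[R[i]]_m) (b : 'cV[R[i]]_n)
  : 'M[R[i]]_(m, n) := a *m b^T.

(* (1_A (x) <b|) applied to a bipartite vector. *)
Definition contractB (R : rcfType) m n (b : 'cV[R[i]]_n) (phi : 'M[R[i]]_(m, n))
  : 'cV[R[i]]_m := phi *m map_mx (fun z => z^*) b.

(* tr_B |u><u| for a bipartite vector u. *)
Definition ptraceB_proj (R : rcfType) m n (u : 'M[R[i]]_(m, n)) : 'M[R[i]]_m :=
  u *m adjmx u.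

Definition eigenvalues (R : rcfType) m (A : 'M[R[i]]_m) : seq R[i] :=
  sval (closed_field_poly_normal (char_poly A)).

Definition xlnx (R : realType) (x : R) : R := if 0 < x then x * ln x else 0.

(* von Neumann entropy S_1(rho) = - tr rho log rho = - sum_lambda lambda log lambda
   over the eigenvalues of rho (real parts; rho is a density matrix). *)
Definition vN_entropy (R : realType) m (rho : 'M[R[i]]_m) : R :=
  - \sum_(l <- eigenvalues rho) xlnx (@complex.Re R l).

Definition h2 (R : realType) (x : R) : R := - xlnx x - xlnx (1 - x).

From HB Require Import structures.
From mathcomp Require Import all_boot all_order all_algebra.
From mathcomp Require Import reals exp.
From mathcomp.real_closed Require Import complex.
From mathcomp Require Import ring lra.
From mathcomp Require Import sesquilinear spectral.
Set Implicit Arguments. Unset Strict Implicit. Unset Printing Implicit Defensive.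
Import Order.TTheory GRing.Theory Num.Theory.
Local Open Scope ring_scope.
Local Open Scope complex_scope.

(* Writing |phi> = |x>|0_B> + |y>, the cross terms vanish under tr_B, so
   rho_A = |a><a| + mu omega with |a> = (|0_A> + eps |x>) / sqrt N of squared norm
   1 - mu, and omega = B B^* for some B.
   Lower bound: in an eigenbasis of rho_A each eigenvalue is a_i + mu b_i with
   0 <= a_i <= 1 - mu, so by convexity of x log x it contributes at most
   mu b_i log b_i to - S(rho_A); and the diagonal (b_i) of omega has entropy at least
   S(omega) (Schur concavity).
   Upper bound: rho_A = Z Z^* with Z = (a | sqrt mu B), where B is rotated so that
   B^* B is diagonal; S(rho_A) = S(Z^* Z) is at most the entropy of the diagonal
   (1 - mu, mu d_1, ..., mu d_r) of Z^* Z, which is h_2(mu) + mu S(omega). *)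

Lemma ler_sum_term (R : numDomainType) (I : finType) (F : I -> R) i :
  (forall j, 0 <= F j) -> F i <= \sum_j F j.
Proof. by move=> F0; rewrite (bigD1 i) //= lerDl sumr_ge0. Qed.

Section XLnX.
Variable R : realType.
Implicit Types x y t : R.

Lemma xlnx0 : xlnx (0 : R) = 0.
Proof. by rewrite /xlnx ltxx. Qed.

Lemma xlnx_gt0 x : 0 < x -> xlnx x = x * ln x.
Proof. by rewrite /xlnx => ->. Qed.

Lemma xlnx_le0 t : 0 <= t <= 1 -> xlnx t <= 0.
Proof.
case/andP=> t0 t1; rewrite /xlnx; case: ifP => // tp.
by rewrite mulr_ge0_le0 // ln_le0.
Qed.

Lemma xlnxM x t : 0 <= x -> 0 <= t -> xlnx (x * t) = x * xlnx t + t * xlnx x.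
Proof.
rewrite !le_eqVlt => /predU1P[<-|x0]; first by rewrite !mul0r xlnx0 mulr0 addr0.
case/predU1P=> [<-|t0]; first by rewrite !mulr0 xlnx0 mulr0 mul0r addr0.
by rewrite !xlnx_gt0 ?mulr_gt0 // lnM ?posrE //; ring.
Qed.

Lemma xlnx_tangent x y : 0 < x -> 0 <= y ->
  xlnx x + (ln x + 1) * (y - x) <= xlnx y.
Proof.
move=> x0; rewrite le_eqVlt => /predU1P[<-|y0].
  by rewrite xlnx0 xlnx_gt0 //; lra.
rewrite !xlnx_gt0 //.
have xy0 : 0 < x / y by rewrite divr_gt0.
have := @le_ln1Dx R (x / y - 1); rewrite [1 + _]addrC subrK ln_div ?posrE //.
move=> /(_ ltac:(lra)) /(ler_wpM2l (ltW y0)).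
by rewrite !mulrBr mulr1 mulrCA divff ?gt_eqF // mulr1; nra.
Qed.

Lemma xlnx_jensen (I : finType) (c d : I -> R) :
  (forall i, 0 <= c i) -> (forall i, 0 <= d i) -> \sum_i c i = 1 ->
  xlnx (\sum_i c i * d i) <= \sum_i c i * xlnx (d i).
Proof.
move=> c0 d0 c1; set x := \sum_i c i * d i.
have cd0 i : 0 <= c i * d i by rewrite mulr_ge0.
have [x0|x0] := eqVneq x 0.
  rewrite x0 xlnx0 sumr_ge0 // => i _.
  have /eqP := @psumr_eq0P _ _ predT _ (fun i _ => cd0 i) x0 i isT.
  by rewrite mulf_eq0 => /predU1P[->|/eqP->]; rewrite ?mul0r ?xlnx0 ?mulr0.
have xp : 0 < x by rewrite lt_def x0 sumr_ge0.
apply: le_trans (ler_sum _ (fun i _ => ler_wpM2l (c0 i) (xlnx_tangent xp (d0 i)))).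
rewrite (eq_bigr (fun i => c i * xlnx x + (ln x + 1) * (c i * d i) - (ln x + 1) * x * c i));
  last by move=> i _; ring.
by rewrite !big_split sumrN /= -mulr_suml -!mulr_sumr c1 -/x; lra.
Qed.

Lemma xlnx_sum_doubly_stochastic (I J : finType) (c : I -> J -> R) (d : J -> R) :
  (forall i j, 0 <= c i j) -> (forall j, 0 <= d j) ->
  (forall i, \sum_j c i j = 1) -> (forall j, \sum_i c i j = 1) ->
  \sum_i xlnx (\sum_j c i j * d j) <= \sum_j xlnx (d j).
Proof.
move=> c0 d0 r1 c1.
apply: le_trans (_ : \sum_i \sum_j c i j * xlnx (d j) <= _).
  by apply: ler_sum => i _; apply: xlnx_jensen.
by rewrite exchange_big /=; apply: ler_sum => j _; rewrite -mulr_suml c1 mul1r.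
Qed.

(* Convexity at the weights [p, mu], using [xlnx (a / p) <= 0]. *)
Lemma xlnx_mix_le (p mu a b : R) : 0 <= mu -> p + mu = 1 -> 0 <= a <= p -> 0 <= b ->
  xlnx (a + mu * b) <= mu * xlnx b.
Proof.
move=> mu0 pmu /andP[a0 ap] b0.
have [p0|p0] := eqVneq p 0.
  have -> : a = 0 by apply/eqP; rewrite eq_le a0 -p0 ap.
  have -> : mu = 1 by lra.
  by rewrite add0r !mul1r.
have pp : 0 < p by rewrite lt_def p0 (le_trans a0).
have ap1 : 0 <= a / p <= 1 by rewrite divr_ge0 ?(ltW pp) //= ler_pdivrMr // mul1r.
pose c i : R := if i then p else mu; pose d i : R := if i then a / p else b.
have c0 i : 0 <= c i by case: i; [exact: ltW | exact: mu0].
have d0 i : 0 <= d i by case: i; [case/andP: ap1 | exact: b0].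
have := xlnx_jensen c0 d0; rewrite !big_bool /c /d /= mulrCA divff // mulr1.
have := mulr_ge0_le0 (ltW pp) (xlnx_le0 ap1).
by move=> ? /(_ pmu); lra.
Qed.

End XLnX.

(* Sylvester's identity, from two block eliminations of [[X, A], [B, 1]]. *)
Lemma char_poly_mulmxC (R : comNzRingType) p q (A : 'M[R]_(p, q)) (B : 'M[R]_(q, p)) :
  'X^q * char_poly (A *m B) = 'X^p * char_poly (B *m A).
Proof.
pose Ap := map_mx polyC A; pose Bp := map_mx polyC B.
pose M := block_mx ('X%:M : 'M_p) Ap Bp (1%:M : 'M_q).
pose L := block_mx (1%:M : 'M_p) 0 (- Bp) ('X%:M : 'M_q).
pose N := block_mx (1%:M : 'M_p) (- Ap) 0 ('X%:M : 'M_q).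
have LM : L *m M = block_mx ('X%:M) Ap 0 (char_poly_mx (B *m A)).
  rewrite mulmx_block /char_poly_mx map_mxM -/Ap -/Bp !mul1mx !mul0mx !addr0 mulmx1.
  by rewrite !mulNmx scalar_mxC addNr [_ + 'X%:M]addrC.
have NM : N *m M = block_mx (char_poly_mx (A *m B)) 0 ('X *: Bp) ('X%:M).
  rewrite mulmx_block /char_poly_mx map_mxM -/Ap -/Bp !mul1mx !mul0mx !add0r mulmx1.
  by rewrite !mulmx1 mulNmx subrr mul_scalar_mx.
have := congr1 determinant LM; rewrite det_mulmx det_ublock det_lblock !det_scalar.
have := congr1 determinant NM; rewrite det_mulmx det_ublock det_lblock !det_scalar.
by rewrite /char_poly expr1n !mul1r => h1 h2; rewrite mulrC -h1 h2.
Qed.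

Section ComplexMatrix.
Variable R : realType.
Local Notation C := R[i].
Local Notation Re := (@complex.Re R).

(* [z^*%C] is [conjc z]: as an argument of a ring operation a bare [z^*] is read as
   [Num.conj z], which is convertible but not syntactically equal to it. *)

Lemma Re_realM (r : R) (z : C) : Re (r%:C * z) = r * Re z.
Proof. by case: z => a b /=; ring. Qed.

Lemma Re_conjMr (z : C) (r : R) : Re (z^*%C * r%:C * z) = Re (z * z^*%C) * r.
Proof. by case: z => a b /=; ring. Qed.

Lemma ge0_complexE (z : C) : 0 <= z -> z = (Re z)%:C /\ 0 <= Re z.
Proof. by case: z => a b; rewrite lecE /= => /andP[/eqP -> a0]. Qed.

Lemma Re_mulcJ_gt0 (z : C) : z != 0 -> 0 < Re (z * z^*%C).
Proof.
case: z => a b nz; rewrite lt_def (proj2 (ge0_complexE (mulcJ_ge0 _))) andbT.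
apply: contraNneq nz => /= ab0.
by have [-> ->] : a = 0 /\ b = 0 by split; nra.
Qed.

Lemma Re_sum (I : finType) (F : I -> C) : Re (\sum_i F i) = \sum_i Re (F i).
Proof. exact: raddf_sum. Qed.

Lemma adjmxE m n (A : 'M[C]_(m, n)) i j : adjmx A i j = (A j i)^*.
Proof. by rewrite !mxE. Qed.

Lemma adjmxK m n (A : 'M[C]_(m, n)) : adjmx (adjmx A) = A.
Proof. by apply/matrixP => i j; rewrite !mxE conjcK. Qed.

Lemma adjmxM m n p (A : 'M[C]_(m, n)) (B : 'M[C]_(n, p)) :
  adjmx (A *m B) = adjmx B *m adjmx A.
Proof. by rewrite /adjmx map_mxM trmx_mul. Qed.

Lemma adjmxD m n (A B : 'M[C]_(m, n)) : adjmx (A + B) = adjmx A + adjmx B.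
Proof. by rewrite /adjmx map_mxD raddfD. Qed.

Lemma adjmxZ m n k (A : 'M[C]_(m, n)) : adjmx (k *: A) = k^*%C *: adjmx A.
Proof. by apply/matrixP => i j; rewrite !mxE rmorphM. Qed.

Lemma adjmx0 m n : adjmx (0 : 'M[C]_(m, n)) = 0.
Proof. by apply/matrixP => i j; rewrite !mxE conjc0. Qed.

Lemma adjmx_row m n1 n2 (A : 'M[C]_(m, n1)) (B : 'M[C]_(m, n2)) :
  adjmx (row_mx A B) = col_mx (adjmx A) (adjmx B).
Proof. by rewrite /adjmx map_row_mx tr_row_mx. Qed.

Lemma adjmx_trmxC m n (A : 'M[C]_(m, n)) : adjmx A = (A ^t*)%sesqui.
Proof. by rewrite /adjmx map_trmx. Qed.

Lemma gram_scale m n (c : R) (A : 'M[C]_(m, n)) :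
  (c%:C *: A) *m adjmx (c%:C *: A) = (c ^+ 2)%:C *: (A *m adjmx A).
Proof. by rewrite adjmxZ conjc_real -scalemxAl -scalemxAr scalerA -rmorphM expr2. Qed.

Lemma gram_hermitian m n (X : 'M[C]_(m, n)) : adjmx (X *m adjmx X) = X *m adjmx X.
Proof. by rewrite adjmxM adjmxK. Qed.

Lemma gram_mulmxl m n p (U : 'M[C]_(m, n)) (X : 'M[C]_(n, p)) :
  (U *m X) *m adjmx (U *m X) = U *m (X *m adjmx X) *m adjmx U.
Proof. by rewrite adjmxM !mulmxA. Qed.

Lemma gram_diagE m n (Y : 'M[C]_(m, n)) i :
  (Y *m adjmx Y) i i = \sum_j Y i j * (Y i j)^*%C.
Proof. by rewrite !mxE; apply: eq_bigr => j _; rewrite adjmxE. Qed.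

Lemma gram_diag_ge0 m n (Y : 'M[C]_(m, n)) i : 0 <= (Y *m adjmx Y) i i.
Proof. by rewrite gram_diagE sumr_ge0 // => j _; apply: mulcJ_ge0. Qed.

Lemma Re_gram_diag_ge0 m n (Y : 'M[C]_(m, n)) i : 0 <= Re ((Y *m adjmx Y) i i).
Proof. exact: (proj2 (ge0_complexE (gram_diag_ge0 Y i))). Qed.

Lemma unitary_conjK n (U D : 'M[C]_n) : U *m adjmx U = 1%:M ->
  U *m (adjmx U *m D *m U) *m adjmx U = D.
Proof. by move=> uU; rewrite !mulmxA uU mul1mx -mulmxA uU mulmx1. Qed.

Lemma unitary_diag_coef n (U A : 'M[C]_n) (d : 'rV[C]_n) i : U *m adjmx U = 1%:M ->
  A = adjmx U *m diag_mx d *m U -> d 0 i = (U *m A *m adjmx U) i i.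
Proof. by move=> uU ->; rewrite unitary_conjK // mxE eqxx mulr1n. Qed.

Lemma trace_gram_unitary m n (U : 'M[C]_m) (X : 'M[C]_(m, n)) : U *m adjmx U = 1%:M ->
  \tr ((U *m X) *m adjmx (U *m X)) = \tr (X *m adjmx X).
Proof.
by move=> uU; rewrite gram_mulmxl mxtrace_mulC [adjmx U *m _]mulmxA (mulmx1C uU) mul1mx.
Qed.

Lemma hermitian_unitary_diag n (A : 'M[C]_n) : adjmx A = A ->
  exists (U : 'M[C]_n) (d : 'rV[C]_n),
    U *m adjmx U = 1%:M /\ A = adjmx U *m diag_mx d *m U.
Proof.
move=> hA; have uU := spectral_unitarymx A.
have /orthomx_spectralP eA : A \is normalmx by apply/normalmxP; rewrite -adjmx_trmxC hA.
exists (spectralmx A), (spectral_diag A).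
by rewrite adjmx_trmxC -invmx_unitary //; split; [rewrite invmx_unitary //; apply/unitarymxP|].
Qed.

Lemma gram_rotate_diag p r (B : 'M[C]_(p, r)) : exists (B' : 'M[C]_(p, r)) (d : 'rV[C]_r),
  B' *m adjmx B' = B *m adjmx B /\ adjmx B' *m B' = diag_mx d.
Proof.
have [U [d [uU]]] := hermitian_unitary_diag (gram_hermitian (adjmx B)).
rewrite adjmxK => eB.
exists (B *m adjmx U), d; split.
  by rewrite adjmxM adjmxK [B *m _ *m _]mulmxA -[B *m _ *m U]mulmxA (mulmx1C uU) mulmx1.
by rewrite -(unitary_conjK (diag_mx d) uU) -eB adjmxM adjmxK !mulmxA.
Qed.

End ComplexMatrix.

Section Entropy.
Variable R : realType.
Local Notation C := R[i].
Local Notation Re := (@complex.Re R).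

Lemma char_poly_eigenvalues n (A : 'M[C]_n) :
  char_poly A = \prod_(z <- eigenvalues A) ('X - z%:P).
Proof.
rewrite /eigenvalues; case: closed_field_poly_normal => s /= ->.
by rewrite (monicP (char_poly_monic A)) scale1r.
Qed.

Lemma vN_entropyE n (A : 'M[C]_n) s : char_poly A = \prod_(z <- s) ('X - z%:P) ->
  vN_entropy A = - \sum_(z <- s) xlnx (Re z).
Proof.
move=> eA; rewrite /vN_entropy; congr (- _); apply: perm_big.
by apply: prod_XsubC_eq; rewrite -char_poly_eigenvalues.
Qed.

Lemma prod_XsubC_nseq0 q : \prod_(z <- nseq q (0 : C)) ('X - z%:P) = 'X^q.
Proof.
rewrite big_nseq subr0; elim: q => [|q IHq] /=; first by rewrite expr0.
by rewrite IHq exprS.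
Qed.

(* [AB] and [BA] share their nonzero eigenvalues, and zero eigenvalues do not
   contribute to the entropy. *)
Lemma vN_entropy_mulmxC p q (A : 'M[C]_(p, q)) (B : 'M[C]_(q, p)) :
  vN_entropy (A *m B) = vN_entropy (B *m A).
Proof.
have := char_poly_mulmxC A B.
rewrite !char_poly_eigenvalues -!prod_XsubC_nseq0 -!big_cat => /prod_XsubC_eq e.
have zero0 k : \sum_(z <- nseq k (0 : C)) xlnx (Re z) = 0.
  by rewrite big1_seq // => z /andP[_]; rewrite mem_nseq => /andP[_ /eqP ->]; rewrite xlnx0.
have := @perm_big R +%R 0 C _ _ (fun _ => true) (fun z => xlnx (Re z)) e.
by rewrite !big_cat /= !zero0 !add0r /vN_entropy => ->.
Qed.

Lemma vN_entropy_diag n (d : 'rV[C]_n) :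
  vN_entropy (diag_mx d) = - \sum_i xlnx (Re (d 0 i)).
Proof.
rewrite (@vN_entropyE _ _ [seq d 0 i | i <- enum 'I_n]); first by rewrite big_map big_enum.
rewrite char_poly_trig ?diag_mx_is_trig // big_map big_enum /=.
by apply: eq_bigr => i _; rewrite mxE eqxx mulr1n.
Qed.

Lemma vN_entropy_conj n (U D : 'M[C]_n) : U *m adjmx U = 1%:M ->
  vN_entropy (adjmx U *m D *m U) = vN_entropy D.
Proof. by move=> uU; rewrite vN_entropy_mulmxC mulmxA uU mul1mx. Qed.

Lemma vN_entropy_gram_unitary m n (U : 'M[C]_m) (X : 'M[C]_(m, n)) : U *m adjmx U = 1%:M ->
  vN_entropy ((U *m X) *m adjmx (U *m X)) = vN_entropy (X *m adjmx X).
Proof.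
by move=> uU; rewrite gram_mulmxl vN_entropy_mulmxC [adjmx U *m _]mulmxA (mulmx1C uU) mul1mx.
Qed.

(* Schur concavity: the diagonal of [X X^*] is a doubly stochastic average of its
   spectrum, the weights being [|U_ik|^2] for a diagonalizing unitary [U]. *)
Lemma vN_entropy_gram_le_diag p q (X : 'M[C]_(p, q)) :
  vN_entropy (X *m adjmx X) <= - \sum_i xlnx (Re ((X *m adjmx X) i i)).
Proof.
have [U [d [uU eA]]] := hermitian_unitary_diag (gram_hermitian X).
set A := X *m adjmx X in eA *.
have d_ge0 i : d 0 i = (Re (d 0 i))%:C /\ 0 <= Re (d 0 i).
  by apply: ge0_complexE; rewrite (unitary_diag_coef i uU eA) -gram_mulmxl gram_diag_ge0.
pose c k i := Re (U i k * (U i k)^*%C).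
have Akk k : Re (A k k) = \sum_i c k i * Re (d 0 i).
  rewrite {1}eA mxE Re_sum; apply: eq_bigr => i _.
  by rewrite mul_mx_diag !mxE {1}(proj1 (d_ge0 i)) Re_conjMr.
have unit_diag (V : 'M[C]_p) i : V *m adjmx V = 1%:M -> \sum_k Re (V i k * (V i k)^*%C) = 1.
  by move=> vV; rewrite -Re_sum -gram_diagE vV mxE eqxx.
rewrite {1}eA vN_entropy_conj // vN_entropy_diag lerN2.
under eq_bigr do rewrite Akk.
apply: xlnx_sum_doubly_stochastic => [k i|i|k|i].
- exact: (proj2 (ge0_complexE (mulcJ_ge0 _))).
- exact: (proj2 (d_ge0 i)).
- rewrite -(unit_diag (adjmx U) k); last by rewrite adjmxK; apply: mulmx1C.
  by apply: eq_bigr => i _; rewrite /c !adjmxE; case: (U i k) => a b /=; ring.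
- exact: unit_diag.
Qed.

Lemma vN_entropy_mix_ge p q r (A : 'M[C]_(p, q)) (B : 'M[C]_(p, r)) (mu : R) :
  0 <= mu -> Re (\tr (A *m adjmx A)) + mu = 1 ->
  mu * vN_entropy (B *m adjmx B) <= vN_entropy (A *m adjmx A + mu%:C *: (B *m adjmx B)).
Proof.
move=> mu0 trA; set rho := _ + _.
have rho_herm : adjmx rho = rho by rewrite adjmxD adjmxZ conjc_real !gram_hermitian.
have [U [d [uU erho]]] := hermitian_unitary_diag rho_herm.
pose a i := Re (((U *m A) *m adjmx (U *m A)) i i).
pose b i := Re (((U *m B) *m adjmx (U *m B)) i i).
have dE i : Re (d 0 i) = a i + mu * b i.
  rewrite (unitary_diag_coef i uU erho) mulmxDr mulmxDl -scalemxAr -scalemxAl -!gram_mulmxl.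
  by rewrite [(_ + _ : 'M_p) i i]mxE [(_ *: _ : 'M_p) i i]mxE raddfD /= Re_realM.
have a_le i : a i <= Re (\tr (A *m adjmx A)).
  by rewrite -(trace_gram_unitary A uU) /mxtrace Re_sum ler_sum_term // => j; apply: Re_gram_diag_ge0.
rewrite erho vN_entropy_conj // vN_entropy_diag -(vN_entropy_gram_unitary B uU).
apply: le_trans (_ : mu * - \sum_i xlnx (b i) <= _).
  by rewrite ler_wpM2l // vN_entropy_gram_le_diag.
rewrite mulrN mulr_sumr lerN2; apply: ler_sum => i _; rewrite dE.
by apply: xlnx_mix_le trA _ _; rewrite ?Re_gram_diag_ge0 ?a_le.
Qed.

Lemma vN_entropy_mix_le p r (a : 'cV[C]_p) (B : 'M[C]_(p, r)) (mu : R) :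
  0 <= mu -> Re (\tr (a *m adjmx a)) + mu = 1 -> Re (\tr (B *m adjmx B)) = 1 ->
  vN_entropy (a *m adjmx a + mu%:C *: (B *m adjmx B)) <=
  h2 mu + mu * vN_entropy (B *m adjmx B).
Proof.
move=> mu0 tra trB.
have [B' [d [eB' ed]]] := gram_rotate_diag B.
have d_ge0 j : 0 <= Re (d 0 j).
  by have := Re_gram_diag_ge0 (adjmx B') j; rewrite adjmxK ed mxE eqxx mulr1n.
have sum_d : \sum_j Re (d 0 j) = 1.
  by rewrite -Re_sum -mxtrace_diag -ed mxtrace_mulC eB'.
have vNB : vN_entropy (B *m adjmx B) = - \sum_j xlnx (Re (d 0 j)).
  by rewrite -eB' vN_entropy_mulmxC ed vN_entropy_diag.
have sqrt_mu2 : (Num.sqrt mu)%:C^*%C * (Num.sqrt mu)%:C = mu%:C.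
  by rewrite conjc_real -rmorphM -expr2 sqr_sqrtr.
pose Z := row_mx a ((Num.sqrt mu)%:C *: B').
have -> : a *m adjmx a + mu%:C *: (B *m adjmx B) = Z *m adjmx Z.
  by rewrite adjmx_row mul_row_col adjmxZ -scalemxAl -scalemxAr scalerA mulrC sqrt_mu2 eB'.
have Z0 : Re ((adjmx Z *m Z) (lshift r 0) (lshift r 0)) = 1 - mu.
  have : \tr (adjmx a *m a) = (adjmx a *m a) 0 0 by rewrite /mxtrace big_ord1.
  by rewrite adjmx_row mul_col_row block_mxEul mxtrace_mulC => <-; lra.
have Zj j : Re ((adjmx Z *m Z) (rshift 1 j) (rshift 1 j)) = mu * Re (d 0 j).
  rewrite adjmx_row mul_col_row block_mxEdr adjmxZ -scalemxAl -scalemxAr scalerA sqrt_mu2 ed.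
  by rewrite !mxE eqxx mulr1n Re_realM.
rewrite vN_entropy_mulmxC.
have := vN_entropy_gram_le_diag (adjmx Z); rewrite adjmxK => /le_trans; apply.
rewrite big_split_ord big_ord1 /= Z0; under eq_bigr do rewrite Zj.
rewrite (eq_bigr _ (fun j _ => xlnxM mu0 (d_ge0 j))) big_split /=.
by rewrite -mulr_sumr -mulr_suml sum_d mul1r vNB /h2; lra.
Qed.

End Entropy.

Section Bipartite.
Variable R : realType.
Local Notation C := R[i].
Local Notation Re := (@complex.Re R).

Lemma inner_gram m n (u : 'M[C]_(m, n)) : inner u u = \tr (u *m adjmx u).
Proof.
by apply: eq_bigr => i _; rewrite gram_diagE; apply: eq_bigr => j _; rewrite mulrC.
Qed.

Lemma Re_inner_ge0 m n (u : 'M[C]_(m, n)) : 0 <= Re (inner u u).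
Proof. by rewrite inner_gram /mxtrace Re_sum sumr_ge0 // => i _; apply: Re_gram_diag_ge0. Qed.

Lemma Re_inner_gt0 m n (u : 'M[C]_(m, n)) : u != 0 -> 0 < Re (inner u u).
Proof.
case/matrix0Pn=> i [j nz]; apply: lt_le_trans (Re_mulcJ_gt0 nz) _.
rewrite inner_gram /mxtrace Re_sum.
apply: le_trans (ler_sum_term _ (Re_gram_diag_ge0 u)).
rewrite gram_diagE Re_sum; apply: ler_sum_term => k.
exact: (proj2 (ge0_complexE (mulcJ_ge0 _))).
Qed.

Lemma Re_inner_expand m n (u v : 'M[C]_(m, n)) (t : R) :
  Re (inner (u + t%:C *: v) (u + t%:C *: v)) =
  Re (inner u u) + 2 * t * Re (inner u v) + t ^+ 2 * Re (inner v v).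
Proof.
rewrite /inner !Re_sum !mulr_sumr -!big_split; apply: eq_bigr => i _.
rewrite !Re_sum !mulr_sumr -!big_split; apply: eq_bigr => j _.
by rewrite !mxE; case: (u i j) => a b; case: (v i j) => c d /=; ring.
Qed.

Lemma Re_inner_unit_ge m n (u v : 'M[C]_(m, n)) :
  Re (inner u u) = 1 -> Re (inner v v) = 1 -> -1 <= Re (inner u v).
Proof.
move=> u1 v1; have := Re_inner_ge0 (u + (- Re (inner u v))%:C *: v).
by rewrite Re_inner_expand u1 v1; nra.
Qed.

Lemma inner_tens m n (a c : 'cV[C]_m) (b d : 'cV[C]_n) :
  inner (tens a b) (tens c d) = inner a c * inner b d.
Proof.
rewrite /inner mulr_suml; apply: eq_bigr => i _; rewrite big_ord1 mulr_sumr.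
apply: eq_bigr => j _; rewrite big_ord1.
by rewrite !mxE !big_ord1 !mxE rmorphM; ring.
Qed.

Lemma trmx_mul_conj n (b : 'cV[C]_n) : b^T *m map_mx conjc b = (inner b b)%:M.
Proof.
apply/matrixP => i j; rewrite !ord1 !mxE eqxx mulr1n.
by apply: eq_bigr => k _; rewrite big_ord1 !mxE mulrC.
Qed.

Lemma contractB_tens m n (v : 'cV[C]_m) (b : 'cV[C]_n) :
  inner b b = 1 -> contractB b (tens v b) = v.
Proof. by move=> b1; rewrite /contractB /tens -mulmxA trmx_mul_conj b1 mulmx1. Qed.

Lemma contractB_sub_tens m n (b : 'cV[C]_n) (phi : 'M[C]_(m, n)) :
  inner b b = 1 -> contractB b (phi - tens (contractB b phi) b) = 0.
Proof.
move=> b1; rewrite {1}/contractB mulmxBl -/(contractB b phi).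
by rewrite -/(contractB b (tens (contractB b phi) b)) contractB_tens // subrr.
Qed.

Lemma ptraceB_proj_tensD m n (v : 'cV[C]_m) (b : 'cV[C]_n) (Y : 'M[C]_(m, n)) :
  inner b b = 1 -> contractB b Y = 0 ->
  ptraceB_proj (tens v b + Y) = v *m adjmx v + Y *m adjmx Y.
Proof.
move=> b1 Yb; have adj_tens : adjmx (tens v b) = map_mx conjc b *m adjmx v.
  by rewrite adjmxM; congr (_ *m _); apply/matrixP => i j; rewrite !mxE.
have Y_tens : Y *m adjmx (tens v b) = 0 by rewrite adj_tens mulmxA -/(contractB b Y) Yb mul0mx.
have tens_Y : tens v b *m adjmx Y = 0 by rewrite -[LHS]adjmxK adjmxM adjmxK Y_tens adjmx0.
rewrite /ptraceB_proj adjmxD mulmxDl !mulmxDr Y_tens tens_Y addr0 add0r.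
by rewrite adj_tens mulmxA -/(contractB b (tens v b)) contractB_tens.
Qed.

Lemma ptraceB_proj_superpos m n (a : 'cV[C]_m) (b : 'cV[C]_n) (phi : 'M[C]_(m, n))
    (s e : R) : inner b b = 1 ->
  ptraceB_proj (s%:C *: (tens a b + e%:C *: phi)) =
  ptraceB_proj (s%:C *: (a + e%:C *: contractB b phi)) +
  ((s * e) ^+ 2)%:C *: ptraceB_proj (phi - tens (contractB b phi) b).
Proof.
move=> b1; set x := contractB b phi.
have -> : s%:C *: (tens a b + e%:C *: phi) =
    tens (s%:C *: (a + e%:C *: x)) b + (s * e)%:C *: (phi - tens x b).
  by apply/matrixP => i j; rewrite !mxE !big_ord1 !mxE rmorphM; ring.
rewrite ptraceB_proj_tensD // /ptraceB_proj ?gram_scale //.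
by rewrite /contractB -scalemxAl -/(contractB b _) contractB_sub_tens // scaler0.
Qed.

Lemma ptraceB_proj_normalize m n (y : 'M[C]_(m, n)) : y != 0 ->
  exists B : 'M[C]_(m, n), (Re (inner y y))^-1%:C *: ptraceB_proj y = B *m adjmx B /\
    Re (\tr (B *m adjmx B)) = 1.
Proof.
move=> /Re_inner_gt0 y0; exists ((Num.sqrt (Re (inner y y))^-1)%:C *: y).
rewrite gram_scale sqr_sqrtr ?invr_ge0 ?ltW //; split => //.
by rewrite mxtraceZ Re_realM -inner_gram mulVf ?gt_eqF.
Qed.

End Bipartite.

Theorem mainTheorem2 (R : realType) (m n : nat)
    (a0 : 'cV[R[i]]_m) (b0 : 'cV[R[i]]_n) (phi : 'M[R[i]]_(m, n)) (eps : R) :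
  inner a0 a0 = 1 -> inner b0 b0 = 1 -> inner phi phi = 1 ->
  let x := contractB b0 phi in
  let y := phi - tens x b0 in
  y != 0 ->
  0 < eps -> eps < 1 ->
  let zero := tens a0 b0 in
  let N := 1 + eps ^+ 2 + 2 * eps * @complex.Re R (inner zero phi) in
  let psi := (Num.sqrt N)^-1%:C *: (zero + eps%:C *: phi) in
  let rhoA := ptraceB_proj psi in
  let mu := eps ^+ 2 * @complex.Re R (inner y y) / N in
  let omega := (@complex.Re R (inner y y))^-1%:C *: ptraceB_proj y in
  mu * vN_entropy omega <= vN_entropy rhoA /\
  vN_entropy rhoA <= h2 mu + mu * vN_entropy omega.
Proof.
move=> ha hb hphi x y hy e0 e1 zero N psi rhoA mu omega.
have zero1 : complex.Re (inner zero zero) = 1 by rewrite inner_tens ha hb mulr1.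
have phi1 : complex.Re (inner phi phi) = 1 by rewrite hphi.
have N_gt0 : 0 < N by have := Re_inner_unit_ge zero1 phi1; rewrite /N; nra.
have ny_gt0 := Re_inner_gt0 hy.
have [B [omegaE trB]] := ptraceB_proj_normalize hy; rewrite -/omega in omegaE.
set s := (Num.sqrt N)^-1.
have s2 : s ^+ 2 = N^-1 by rewrite exprVn sqr_sqrtr // ltW.
have mu_ge0 : 0 <= mu by rewrite /mu divr_ge0 ?mulr_ge0 ?sqr_ge0 ?ltW.
pose A := s%:C *: (a0 + eps%:C *: x).
have rhoE : rhoA = A *m adjmx A + mu%:C *: omega.
  rewrite /rhoA /psi /zero ptraceB_proj_superpos // /omega scalerA -rmorphM.
  by rewrite exprMn s2 /mu mulrAC mulfK ?gt_eqF // mulrC.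
have trA : complex.Re (\tr (A *m adjmx A)) + mu = 1.
  have : complex.Re (\tr rhoA) = 1.
    rewrite /rhoA /ptraceB_proj gram_scale mxtraceZ Re_realM -inner_gram.
    by rewrite Re_inner_expand zero1 phi1 mulr1 addrAC -/N s2 mulVf ?gt_eqF.
  by rewrite rhoE omegaE mxtraceD mxtraceZ raddfD /= Re_realM trB mulr1.
rewrite rhoE omegaE.
by split; [apply: vN_entropy_mix_ge | apply: vN_entropy_mix_le].
Qed.
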